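(* Let $P=\langle(\mathcal Q,\le),N\rangle$ be a possibilistic normal program such that $(\mathcal Q,\le)$ is a totally ordered set and the language of $P$ has no extended (strongly negated) atoms. Then $M$ is a possibilistic answer set of $P$ if and only if $M$ is a possibilistic stable model of $P$.
   Context: $(\mathcal Q,\le)$ is a finite (here totally ordered) lattice with top $\top_{\mathcal Q}$. A possibilistic normal program is $P=\langle(\mathcal Q,\le),N\rangle$ where $N$ is a finite set of clauses $r=\alpha:a\leftarrow\mathcal B^+,not\ \mathcal B^-$ with exactly one head atom $a$, $\alpha\in\mathcal Q$; $n(r)=\alpha$, $r^*$ the underlying clause, $P^*=\{r^*\}$. Answer sets of $P^*$ are Gelfond–Lifschitz answer sets. $\mathcal{PS}$: sets of pairs (atom, element of $\mathcal Q$) with each atom at most once; $M^*$ its atoms; $A\sqsubseteq B$ iff $A^*\subseteq B^*$ and $\gamma\le\delta$ whenever $(x,\gamma)\in A,(x,\delta)\in B$. Reduct $P_M=\{n(r):(\{a\}\cap M)\leftarrow\mathcal B^+\mid r\in N, a\in M,\mathcal B^-\cap M=\emptyset,\mathcal B^+\subseteq M\}$. $\vdash_{PL}$ is necessity-valued possibilistic-logic inference (clauses read as weighted implications; classical axioms weighted $\top_{\mathcal Q}$; rules $(\varphi\ \gamma),(\varphi\to\psi\ \delta)\vdash(\psi\ \min\{\gamma,\delta\})$ and weakening $(\varphi\ \gamma)\vdash(\varphi\ \epsilon)$ for $\epsilon\le\gamma$). $P\Vvdash_{PL}M$ iff $M^*$ is an answer set of $P^*$ and $P_{M^*}\vdash_{PL}(a\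 \gamma)$ for all $(a,\gamma)\in M$. $M$ is a possibilistic answer set iff $M^*$ is an answer set of $P^*$, $P\Vvdash_{PL}M$, and there is no $M''\ne M$ in $\mathcal{PS}$ with $M\sqsubseteq M''$ and $P\Vvdash_{PL}M''$. Possibilistic stable models (Nicolas et al.): for a set of atoms $S$, the reduct $P^S=\{n(r):a\leftarrow\mathcal B^+\mid r\in N,\ \mathcal B^-\cap S=\emptyset\}$; for a definite possibilistic program $D$ and $A\in\mathcal{PS}$, $T_D(A)$ assigns to each atom $a$ that is the head of some $r\in D$ with $\mathcal B^+(r)\subseteq A^*$ the value $\max$ over such $r$ of $\min(\{n(r)\}\cup\{\beta:(b,\beta)\in A,b\in\mathcal B^+(r)\})$; $Cn(D)$ is the least fixpoint of $T_D$ obtained by iterating from $\emptyset$. $M$ is a possibilistic stable model of $P$ iff $M=Cn(P^{M^*})$. *)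

From HB Require Import structures.
From mathcomp Require Import all_boot all_order.
Set Implicit Arguments. Unset Strict Implicit. Unset Printing Implicit Defensive.
Import Order.TTheory.
Local Open Scope order_scope.

Section Possibilistic.
Variables (d : Order.disp_t) (Q : finTBOrderType d) (A : finType).

Record clause := Clause { head : A; weight : Q; pos : {set A}; neg : {set A} }.

Record dclause := DClause { dhead : A; dweight : Q; dpos : {set A} }.

(* Elements of PS: partial maps atom -> Q (each atom at most once). *)
Definition pset := {ffun A -> option Q}.
Definition ps_empty : pset := [ffun _ => None].
Definition atoms (M : pset) : {set A} := [set a | M a != None].

Definition ps_le (M1 M2 : pset) : Prop :=
  atoms M1 \subset atoms M2 /\
  forall x g e, M1 x = Some g -> M2 x = Some e -> g <= e.

Definition gl_reduct (N : seq clause) (S : {set A}) : seq (A * {set A}) :=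
  [seq (head r, pos r) | r <- N & [disjoint neg r & S]].

Definition def_model (R : seq (A * {set A})) (S : {set A}) : Prop :=
  forall r, r \in R -> r.2 \subset S -> r.1 \in S.

Definition answer_set (N : seq clause) (S : {set A}) : Prop :=
  def_model (gl_reduct N S) S /\
  forall S', def_model (gl_reduct N S) S' -> S \subset S'.

Inductive formula :=
| FVar of A
| FBot
| FImp of formula & formula
| FAnd of formula & formula.

Definition FTop := FImp FBot FBot.

Fixpoint formula_code (f : formula) : GenTree.tree A :=
  match f with
  | FVar a => GenTree.Leaf a
  | FBot => GenTree.Node 0 [::]
  | FImp f g => GenTree.Node 1 [:: formula_code f; formula_code g]
  | FAnd f g => GenTree.Node 2 [:: formula_code f; formula_code g]
  end.
Fixpoint formula_decode (t : GenTree.tree A) : option formula :=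
  match t with
  | GenTree.Leaf a => Some (FVar a)
  | GenTree.Node 0 [::] => Some FBot
  | GenTree.Node 1 [:: t1; t2] =>
      if (formula_decode t1, formula_decode t2) is (Some f, Some g)
      then Some (FImp f g) else None
  | GenTree.Node 2 [:: t1; t2] =>
      if (formula_decode t1, formula_decode t2) is (Some f, Some g)
      then Some (FAnd f g) else None
  | _ => None
  end.
Lemma formula_codeK : pcancel formula_code formula_decode.
Proof. by elim=> //= [f -> g ->|f -> g ->]. Qed.
HB.instance Definition _ := Countable.copy formula (pcan_type formula_codeK).

Fixpoint feval (v : A -> bool) (f : formula) : bool :=
  match f with
  | FVar a => v a
  | FBot => false
  | FImp f g => feval v f ==> feval v g
  | FAnd f g => feval v f && feval v g
  end.

(* classical (propositional) axioms = tautologies *)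
Definition tautology (f : formula) : Prop := forall v, feval v f.

Inductive pl_der (K : seq (formula * Q)) : formula -> Q -> Prop :=
| pl_hyp f a : (f, a) \in K -> pl_der K f a
| pl_ax f : tautology f -> pl_der K f \top
| pl_mp f g a b : pl_der K f a -> pl_der K (FImp f g) b ->
    pl_der K g (Order.min a b)
| pl_weak f a b : pl_der K f a -> b <= a -> pl_der K f b.

Definition dclause_formula (r : dclause) : formula * Q :=
  (FImp (foldr FAnd FTop [seq FVar b | b <- enum (dpos r)]) (FVar (dhead r)),
   dweight r).

Definition reduct_M (N : seq clause) (M : {set A}) : seq dclause :=
  [seq DClause (head r) (weight r) (pos r) |
     r <- N & [&& head r \in M, [disjoint neg r & M] & pos r \subset M]].

Definition pl_entails (N : seq clause) (M : pset) : Prop :=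
  answer_set N (atoms M) /\
  forall a g, M a = Some g ->
    pl_der [seq dclause_formula r | r <- reduct_M N (atoms M)] (FVar a) g.

Definition poss_answer_set (N : seq clause) (M : pset) : Prop :=
  answer_set N (atoms M) /\ pl_entails N M /\
  ~ (exists M'', M'' <> M /\ ps_le M M'' /\ pl_entails N M'').

Definition reduct_S (N : seq clause) (S : {set A}) : seq dclause :=
  [seq DClause (head r) (weight r) (pos r) | r <- N & [disjoint neg r & S]].

Definition T_op (D : seq dclause) (M : pset) : pset :=
  [ffun a =>
     if has (fun r => (dhead r == a) && (dpos r \subset atoms M)) D then
       Some (\big[Order.max/(\bot : Q)]_(r <- D | (dhead r == a) && (dpos r \subset atoms M))
               (\big[Order.min/(dweight r)]_(b in dpos r) odflt \top (M b)))
     else None].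

Definition is_Cn (D : seq dclause) (M : pset) : Prop :=
  (exists n, M = iter n (T_op D) ps_empty) /\ T_op D M = M.

Definition poss_stable_model (N : seq clause) (M : pset) : Prop :=
  is_Cn (reduct_S N (atoms M)) M.

End Possibilistic.

From Pilot Require Import Defs.
From HB Require Import structures.
From mathcomp Require Import all_boot all_order.
Set Implicit Arguments. Unset Strict Implicit. Unset Printing Implicit Defensive.
Import Order.TTheory.
Local Open Scope order_scope.

(* Let S := M* and P^S the definite program reducing P by S.  Iterating
   T_{P^S} from the empty set reaches its least fixpoint Cn(P^S), whose atoms
   form the least model of the Gelfond-Lifschitz reduct; so Cn(P^S) has atom
   set S exactly when S is an answer set.  For an answer set S, the clauses of
   P_S derive every pair (a, g) of Cn(P^S) (induction along the iteration), and
   conversely, by soundness of the cut of P_S at level g, an atom derived with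
   weight g carries a value at least g in every fixpoint of T_{P^S}.  Hence
   Cn(P^S) is the greatest element of PS over S entailed by P, which is the
   maximality condition defining possibilistic answer sets. *)

Section ClauseEqType.
Variables (d : Order.disp_t) (Q : finTBOrderType d) (A : finType).

Definition clause_tuple (c : clause Q A) := (Defs.head c, weight c, pos c, neg c).
Definition tuple_clause (t : A * Q * {set A} * {set A}) :=
  let: (a, w, p, n) := t in Clause a w p n.
Lemma clause_tupleK : cancel clause_tuple tuple_clause. Proof. by case. Qed.
HB.instance Definition _ := Equality.copy (clause Q A) (can_type clause_tupleK).

Definition dclause_tuple (r : dclause Q A) := (dhead r, dweight r, dpos r).
Definition tuple_dclause (t : A * Q * {set A}) :=
  let: (a, w, p) := t in DClause a w p.
Lemma dclause_tupleK : cancel dclause_tuple tuple_dclause. Proof. by case. Qed.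
HB.instance Definition _ := Equality.copy (dclause Q A) (can_type dclause_tupleK).

End ClauseEqType.

Section PossibilisticSets.
Variables (d : Order.disp_t) (Q : finTBOrderType d) (A : finType).
Implicit Types (M C : pset Q A) (D : seq (dclause Q A)).

Lemma atoms_Some M (s : {set A}) b :
  s \subset atoms M -> b \in s -> exists g, M b = Some g.
Proof. by move=> /subsetP/[apply]; rewrite inE; case: (M b) => // g; exists g. Qed.

Lemma atoms_ps_empty : atoms (ps_empty Q A) = set0.
Proof. by apply/setP => x; rewrite !inE ffunE. Qed.

Lemma ps_le_refl M : ps_le M M.
Proof. by split=> // x g e -> [->]. Qed.

Lemma ps_le_trans M1 M2 M3 : ps_le M1 M2 -> ps_le M2 M3 -> ps_le M1 M3.
Proof.
move=> [s12 l12] [s23 l23]; split=> [|x g e h1 h3]; first exact: subset_trans s23.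
have [|f h2] := atoms_Some s12 (b := x); first by rewrite inE h1.
exact: le_trans (l12 _ _ _ h1 h2) (l23 _ _ _ h2 h3).
Qed.

Lemma ps_le_anti M1 M2 : ps_le M1 M2 -> ps_le M2 M1 -> M1 = M2.
Proof.
move=> [s12 l12] [s21 l21]; apply/ffunP=> x.
case h1: (M1 x) => [g|]; case h2: (M2 x) => [e|] //.
- by rewrite (@le_anti _ _ g e) ?(l12 _ _ _ h1 h2) ?(l21 _ _ _ h2 h1).
- by have := subsetP s12 x; rewrite !inE h1 h2 => /(_ isT).
- by have := subsetP s21 x; rewrite !inE h1 h2 => /(_ isT).
Qed.

Lemma ps_empty_le M : ps_le (ps_empty Q A) M.
Proof. by split=> [|x g e]; rewrite ?atoms_ps_empty ?sub0set ?ffunE. Qed.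

Lemma atoms_T_op D M a :
  (a \in atoms (T_op D M)) = has (fun r => (dhead r == a) && (dpos r \subset atoms M)) D.
Proof. by rewrite inE ffunE; case: ifP. Qed.

(* Needs Q totally ordered: [max x y] is one of [x], [y]. *)
Lemma bigmax_seq_attained (I : eqType) (r : seq I) (P : pred I) (F : I -> Q) :
  has P r -> exists2 i, (i \in r) && P i & \big[Order.max/(\bot : Q)]_(j <- r | P j) F j = F i.
Proof.
elim: r => //= h t IH; rewrite big_cons.
have [Ph _ | _ /IH [i /andP[it Pi] ->]] := boolP (P h); last first.
  by exists i; rewrite ?inE ?it ?orbT.
have [/IH [i /andP[it Pi] ->]|Pt] := boolP (has P t).
  by case: (leP (F h) (F i)) => _; [exists i | exists h]; rewrite ?inE ?eqxx ?it ?orbT.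
by exists h; rewrite ?inE ?eqxx ?Ph // big_hasC ?max_l ?le0x.
Qed.

Lemma T_op_mono D M1 M2 : ps_le M1 M2 -> ps_le (T_op D M1) (T_op D M2).
Proof.
move=> [s12 l12]; split.
  apply/subsetP => a; rewrite !atoms_T_op; apply: sub_has => r /andP[-> hp].
  exact: subset_trans s12.
move=> a g e; rewrite !ffunE; case: ifP => // _ [<-]; case: ifP => // _ [<-].
rewrite big_seq_cond; apply: bigmax_le => [|r /and3P[rD ha hp]]; first exact: le0x.
apply: bigmax_sup_seq rD _ _; first by rewrite ha (subset_trans hp s12).
apply: le_bigmin => [|b bp]; first exact: bigmin_le_id.
apply: le_trans (bigmin_le_cond _ _ bp) _.
have [g1 e1] := atoms_Some hp bp; have [g2 e2] := atoms_Some (subset_trans hp s12) bp.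
by rewrite e1 e2; exact: l12 e1 e2.
Qed.

Definition T_iter D n := iter n (T_op D) (ps_empty Q A).

Lemma T_iter_chain D n : ps_le (T_iter D n) (T_iter D n.+1).
Proof.
elim: n => [|n IH]; first exact: ps_empty_le.
by rewrite /T_iter iterS [in X in ps_le _ X]iterS; apply: T_op_mono.
Qed.

Lemma T_iter_mono D m n : (m <= n)%N -> ps_le (T_iter D m) (T_iter D n).
Proof.
move=> /subnK <-; elim: (n - m)%N => [|k IH]; first exact: ps_le_refl.
exact: ps_le_trans IH (T_iter_chain _ _).
Qed.

Lemma T_iter_le_fixpoint D C n : T_op D C = C -> ps_le (T_iter D n) C.
Proof.
move=> fixC; elim: n => [|n IH]; first exact: ps_empty_le.
by rewrite /T_iter iterS -fixC; apply: T_op_mono.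
Qed.

(* PS is finite, so the increasing chain of iterates repeats a value and
   stalls from there on. *)
Lemma T_iter_fixpoint D : exists n, T_op D (T_iter D n) = T_iter D n.
Proof.
pose f (i : 'I_#|{: pset Q A}|.+1) := T_iter D i.
have /injectivePn [i [j neq_ij fij]] : ~~ injectiveb f.
  by apply/injectiveP => /leq_card; rewrite card_ord ltnn.
have stall (m n : 'I_#|{: pset Q A}|.+1) : (m < n)%N -> f m = f n ->
    T_op D (T_iter D m) = T_iter D m.
  move=> lt_mn fmn; apply: ps_le_anti; last exact: T_iter_chain.
  by rewrite -[T_op _ _]/(T_iter D m.+1) [X in ps_le _ X]fmn; exact: T_iter_mono.
case: (ltngtP i j) => [lt|lt|eq]; first by exists i; exact: stall lt fij.
  by exists j; exact: stall lt (esym fij).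
by move: neq_ij; rewrite (val_inj eq) eqxx.
Qed.

End PossibilisticSets.

Section PossibilisticLogic.
Variables (d : Order.disp_t) (Q : finTBOrderType d) (A : finType).
Variable K : seq (formula A * Q).

Definition big_and (s : seq A) := foldr (@FAnd A) (FTop A) [seq FVar b | b <- s].

Lemma feval_big_and v s : feval v (big_and s) = all v s.
Proof. by elim: s => //= b s ->. Qed.

Lemma pl_der_sound f g : pl_der K f g ->
  forall v, (forall h w, (h, w) \in K -> g <= w -> feval v h) -> feval v f.
Proof.
elim=> {f g} [f a fK|f tf|f h a b _ IH1 _ IH2|f a b _ IH le_ba] v Hv //.
- exact: Hv fK (lexx a).
- have min_a : Order.min a b <= a by rewrite ge_min lexx.
  have min_b : Order.min a b <= b by rewrite ge_min lexx orbT.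
  have IHa := IH1 v (fun h w hK le => Hv h w hK (le_trans min_a le)).
  have IHb := IH2 v (fun h w hK le => Hv h w hK (le_trans min_b le)).
  by move: IHb => /= /implyP; apply.
- by apply: IH => h w hK le; apply: Hv hK (le_trans le_ba le).
Qed.

Lemma pl_der_big_and s g :
  (forall b, b \in s -> pl_der K (FVar b) g) -> pl_der K (big_and s) g.
Proof.
elim: s => /= [|b s IH] Hs.
  by apply: (pl_weak (pl_ax K (f := FTop A) (fun v => isT))); exact: lex1.
have Hb := Hs b (mem_head _ _).
have Ht := IH (fun x xs => Hs x (mem_behead (s := b :: s) xs)).
have taut : tautology (FImp (FVar b) (FImp (big_and s) (FAnd (FVar b) (big_and s)))).
  by move=> v /=; case: (v b); case: (feval v _).
by apply: (pl_weak (pl_mp Ht (pl_mp Hb (pl_ax K taut)))); rewrite !le_min lexx lex1.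
Qed.

End PossibilisticLogic.

Section Reducts.
Variables (d : Order.disp_t) (Q : finTBOrderType d) (A : finType).
Variable N : seq (clause Q A).
Implicit Types (M C : pset Q A) (S : {set A}).

Definition reduct_theory S := [seq dclause_formula r | r <- reduct_M N S].

Lemma mem_reduct_S S c : c \in N -> [disjoint neg c & S] ->
  DClause (Defs.head c) (weight c) (pos c) \in reduct_S N S.
Proof. by move=> cN dS; apply/mapP; exists c; rewrite ?mem_filter ?dS. Qed.

Lemma mem_gl_reduct S c : c \in N -> [disjoint neg c & S] ->
  (Defs.head c, pos c) \in gl_reduct N S.
Proof. by move=> cN dS; apply/mapP; exists c; rewrite ?mem_filter ?dS. Qed.

Lemma mem_reduct_theory S c :
  c \in N -> Defs.head c \in S -> [disjoint neg c & S] -> pos c \subset S ->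
  (FImp (big_and (enum (pos c))) (FVar (Defs.head c)), weight c) \in reduct_theory S.
Proof.
move=> cN hS dS pS; apply/mapP; exists (DClause (Defs.head c) (weight c) (pos c)) => //.
by apply/mapP; exists c; rewrite ?mem_filter ?hS ?dS ?pS.
Qed.

Lemma answer_set_antichain S S' :
  answer_set N S -> answer_set N S' -> S \subset S' -> S = S'.
Proof.
move=> [modS minS] [_ minS'] sub; apply/eqP; rewrite eqEsubset sub /=.
apply: minS' => r /mapP[c]; rewrite mem_filter => /andP[dc cN] -> /= hp.
exact: modS (mem_gl_reduct cN (disjointWr sub dc)) hp.
Qed.

Lemma fixpoint_model S C :
  T_op (reduct_S N S) C = C -> def_model (gl_reduct N S) (atoms C).
Proof.
move=> fixC r /mapP[c]; rewrite mem_filter => /andP[dc cN] -> /= hp.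
rewrite -fixC atoms_T_op; apply/hasP.
by exists (DClause (Defs.head c) (weight c) (pos c)); rewrite ?mem_reduct_S //= eqxx.
Qed.

Lemma T_iter_sub_model S S' n :
  def_model (gl_reduct N S) S' -> atoms (T_iter (reduct_S N S) n) \subset S'.
Proof.
move=> modS'; elim: n => [|n IH]; first by rewrite atoms_ps_empty sub0set.
apply/subsetP => a; rewrite /T_iter iterS atoms_T_op => /hasP[r /mapP[c]].
rewrite mem_filter => /andP[dc cN] -> /andP[/eqP <- hp].
exact: modS' (mem_gl_reduct cN dc) (subset_trans hp IH).
Qed.

Lemma Cn_least_model S C : is_Cn (reduct_S N S) C ->
  def_model (gl_reduct N S) (atoms C) /\
  forall S', def_model (gl_reduct N S) S' -> atoms C \subset S'.
Proof.
move=> [[n ->] fixC]; split=> [|S']; first exact: fixpoint_model.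
exact: T_iter_sub_model.
Qed.

Lemma stable_model_answer_set M : poss_stable_model N M -> answer_set N (atoms M).
Proof. exact: Cn_least_model. Qed.

(* The weight of a clause and the values of its body combine through one
   modus ponens, whose weight is their minimum. *)
Lemma T_iter_derivable S C n a g :
  T_op (reduct_S N S) C = C -> atoms C = S ->
  T_iter (reduct_S N S) n a = Some g -> pl_der (reduct_theory S) (FVar a) g.
Proof.
move=> fixC atC; elim: n a g => [|n IH] a g Tna; first by rewrite ffunE in Tna.
have [le_n _] := T_iter_le_fixpoint n fixC; have [le_n1 _] := T_iter_le_fixpoint n.+1 fixC.
rewrite atC in le_n le_n1.
have aS : a \in S by apply: (subsetP le_n1); rewrite inE Tna.
move: Tna; rewrite /T_iter iterS ffunE; case: ifP => // hasa [<-].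
have [r /andP[rD /andP[/eqP ra hp]] ->] := bigmax_seq_attained
  (fun r => \big[Order.min/dweight r]_(b in dpos r) odflt \top (T_iter (reduct_S N S) n b)) hasa.
subst a; move: rD hp aS => /mapP[c]; rewrite mem_filter => /andP[dc cN] -> /= hp aS.
set F := \big[Order.min/weight c]_(b in pos c) _.
have body : pl_der (reduct_theory S) (big_and (enum (pos c))) F.
  apply: pl_der_big_and => b; rewrite mem_enum => bp.
  have [gb eb] := atoms_Some hp bp.
  apply: pl_weak (IH b gb eb) _.
  by apply: le_trans (bigmin_le_cond _ _ bp) _; rewrite eb.
have := pl_mp body (pl_hyp (mem_reduct_theory cN aS dc (subset_trans hp le_n))).
by rewrite min_l // bigmin_le_id.
Qed.

(* Under v x := (g <= C x) every clause of P_S of weight at least g holds,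
   since C is closed under T_{P^S}; soundness then bounds derived weights. *)
Lemma derivable_le_fixpoint S C a g :
  T_op (reduct_S N S) C = C -> pl_der (reduct_theory S) (FVar a) g ->
  exists2 e, C a = Some e & g <= e.
Proof.
move=> fixC der; pose v x := if C x is Some e then g <= e else false.
suff Hv : forall h w, (h, w) \in reduct_theory S -> g <= w -> feval v h.
  by move: (pl_der_sound der Hv); rewrite /= /v; case: (C a) => // e; exists e.
move=> h w /mapP[r /mapP[c]]; rewrite mem_filter => /andP[/and3P[_ dc _] cN] -> [-> ->] le_gw.
rewrite /= feval_big_and; apply/implyP => /allP vbody.
have hp : pos c \subset atoms C.
  by apply/subsetP => b bp; move: (vbody b); rewrite mem_enum inE /v => /(_ bp); case: (C b).
rewrite /v -fixC ffunE.
have rD := mem_reduct_S cN dc.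
rewrite (introT hasP) /=; last by exists (DClause (Defs.head c) (weight c) (pos c)); rewrite //= eqxx.
apply: bigmax_sup_seq rD _ _; rewrite /= ?eqxx ?hp //.
apply: le_bigmin => // b bp.
by move: (vbody b); rewrite mem_enum /v => /(_ bp); case: (C b).
Qed.

Lemma stable_model_pl_entails M : poss_stable_model N M -> pl_entails N M.
Proof.
move=> stM; have [[n eM] fixM] := stM.
split=> [|a g Ma]; first exact: stable_model_answer_set.
by apply: (T_iter_derivable (n := n) fixM erefl); rewrite /T_iter -eM.
Qed.

Lemma pl_entails_le_fixpoint M C :
  T_op (reduct_S N (atoms C)) C = C -> atoms M = atoms C -> pl_entails N M -> ps_le M C.
Proof.
move=> fixC atM [_ der]; split=> [|x g e Mx Cx]; first by rewrite atM.
have := der x g Mx; rewrite atM => /(derivable_le_fixpoint fixC) [e' Ce' le_ge'].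
by move: Ce'; rewrite Cx => -[->].
Qed.

End Reducts.

Theorem proposition5 (d : Order.disp_t) (Q : finTBOrderType d) (A : finType)
  (N : seq (clause Q A)) (M : pset Q A) :
  poss_answer_set N M <-> poss_stable_model N M.
Proof.
split=> [[ansM [entM maxM]] | stM].
- set S := atoms M in ansM entM maxM *.
  have [n fixC] := T_iter_fixpoint (reduct_S N S).
  set C := T_iter (reduct_S N S) n in fixC.
  have CnC : is_Cn (reduct_S N S) C by split=> //; exists n.
  have [modC minC] := Cn_least_model CnC.
  have atC : atoms C = S.
    by apply/eqP; rewrite eqEsubset (minC _ ansM.1) (ansM.2 _ modC).
  have stC : poss_stable_model N C by rewrite /poss_stable_model atC.
  have leMC := pl_entails_le_fixpoint stC.2 (esym atC) entM.
  have [eqCM|neqCM] := eqVneq C M; first by rewrite -eqCM.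
  case: maxM; exists C.
  by split; [exact/eqP | split=> //; exact: stable_model_pl_entails].
- have ansM := stable_model_answer_set stM; have entM := stable_model_pl_entails stM.
  split=> //; split=> // -[M'' [neqM'' [leMM'' entM'']]].
  have atM'' := answer_set_antichain ansM entM''.1 leMM''.1.
  by apply: neqM''; apply: ps_le_anti (pl_entails_le_fixpoint stM.2 (esym atM'') entM'') leMM''.
Qed.
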